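(* Let $\mathscr{H}$ be a $d$-dimensional complex Hilbert space and let $A=\{|a_j\rangle\}_{j=1}^{d}$ and $B=\{|b_k\rangle\}_{k=1}^{d}$ be two orthonormal bases of $\mathscr{H}$. Let $(A,B)$ denote the $d\times 2d$ matrix whose columns are $|a_1\rangle,\dots,|a_d\rangle,|b_1\rangle,\dots,|b_d\rangle$ (written in some fixed basis of $\mathscr{H}$). Then, for $s\in\{2,\dots,d+1\}$, the bases $A$ and $B$ are $s$-order incompatible if and only if $\operatorname{spark}(A,B)=s$.
   Context: Two orthonormal bases $A$ and $B$ of $\mathscr{H}$ are called $s$-order incompatible, for an integer $s\in\{2,\dots,d+1\}$, if: (1) for all nonempty subsets $S_A\subseteq A$ and $S_B\subseteq B$ with $|S_A|+|S_B|<s$ one has $\operatorname{span}(S_A)\cap\operatorname{span}(S_B)=\{0\}$; and (2) there exist subsets $S_A\subseteq A$, $S_B\subseteq B$ with $|S_A|+|S_B|=s$ such that $\operatorname{span}(S_A)\cap\operatorname{span}(S_B)\neq\{0\}$. Spans are over $\mathbb{C}$. The spark of a matrix $M$ is the smallest integer $k$ such that some set of $k$ columns of $M$ is linearly dependent. *)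

From HB Require Import structures.
From mathcomp Require Import all_boot all_order all_algebra.
Set Implicit Arguments. Unset Strict Implicit. Unset Printing Implicit Defensive.
Import Order.TTheory GRing.Theory Num.Theory.
Local Open Scope ring_scope.

(* The d-dimensional Hilbert space is modelled as column vectors 'cV[C]_d
   over a numeric algebraically closed field C (e.g. the complex numbers),
   with the standard inner product <u,v> = \sum_i (u i)^* (v i).
   A basis is stored as a d x d matrix whose j-th column is the j-th vector. *)

Section Defs.
Variable C : numClosedFieldType.

Definition orthonormal_basis (d : nat) (M : 'M[C]_d) : Prop :=
  forall j k : 'I_d, \sum_(i < d) (M i j)^* * M i k = (j == k)%:R.

Definition in_span (m n : nat) (M : 'M[C]_(m, n)) (S : {set 'I_n})
    (v : 'cV[C]_m) : Prop :=
  exists c : 'I_n -> C, v = \sum_(j in S) c j *: col j M.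

Definition spans_meet (d : nat) (A B : 'M[C]_d) (SA SB : {set 'I_d}) : Prop :=
  exists v : 'cV[C]_d, v != 0 /\ in_span A SA v /\ in_span B SB v.

Definition s_order_incompatible (d : nat) (A B : 'M[C]_d) (s : nat) : Prop :=
  (forall SA SB : {set 'I_d}, SA != set0 -> SB != set0 ->
      (#|SA| + #|SB| < s)%N -> ~ spans_meet A B SA SB) /\
  (exists SA SB : {set 'I_d}, (#|SA| + #|SB|)%N = s /\ spans_meet A B SA SB).

Definition cols_dependent (m n : nat) (M : 'M[C]_(m, n)) (T : {set 'I_n}) : Prop :=
  exists c : 'I_n -> C, (exists2 j, j \in T & c j != 0) /\
    \sum_(j in T) c j *: col j M = 0.

Definition spark_is (m n : nat) (M : 'M[C]_(m, n)) (k : nat) : Prop :=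
  (exists T : {set 'I_n}, #|T| = k /\ cols_dependent M T) /\
  (forall T : {set 'I_n}, (#|T| < k)%N -> ~ cols_dependent M T).
End Defs.

From HB Require Import structures.
From mathcomp Require Import all_boot all_order all_algebra.
Set Implicit Arguments. Unset Strict Implicit. Unset Printing Implicit Defensive.
Import Order.TTheory GRing.Theory Num.Theory.
Local Open Scope ring_scope.

(* The columns of an orthonormal basis are linearly independent, so a
   vanishing nontrivial combination of a set T of columns of (A, B) splits as
   sum_{j in S_A} x_j a_j = - sum_{k in S_B} y_k b_k with both sides nonzero:
   a nonzero vector of span(S_A) ∩ span(S_B).  Conversely such a vector yields
   a dependency among the columns S_A ⊔ S_B, and |T| = |S_A| + |S_B|. *)

Section SplitColumns.
Variables (n1 n2 : nat).

Definition lset (T : {set 'I_(n1 + n2)}) : {set 'I_n1} := [set j | lshift n2 j \in T].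
Definition rset (T : {set 'I_(n1 + n2)}) : {set 'I_n2} := [set j | rshift n1 j \in T].

Definition join_set (SA : {set 'I_n1}) (SB : {set 'I_n2}) : {set 'I_(n1 + n2)} :=
  [set i | match split i with inl j => j \in SA | inr j => j \in SB end].

Lemma lset_join SA SB : lset (join_set SA SB) = SA.
Proof. by apply/setP => j; rewrite !inE (unsplitK (inl _ j)). Qed.

Lemma rset_join SA SB : rset (join_set SA SB) = SB.
Proof. by apply/setP => j; rewrite !inE (unsplitK (inr _ j)). Qed.

Lemma card_split_set (T : {set 'I_(n1 + n2)}) : #|T| = (#|lset T| + #|rset T|)%N.
Proof.
rewrite -!sum1_card big_split_ord /=.
by congr (_ + _)%N; apply: eq_bigl => j; rewrite inE.
Qed.

Lemma sum_cols_row_mx (C : nzRingType) m (A : 'M[C]_(m, n1)) (B : 'M[C]_(m, n2))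
    (T : {set 'I_(n1 + n2)}) (c : 'I_(n1 + n2) -> C) :
  \sum_(i in T) c i *: col i (row_mx A B) =
  \sum_(j in lset T) c (lshift n2 j) *: col j A +
  \sum_(j in rset T) c (rshift n1 j) *: col j B.
Proof.
by rewrite big_split_ord /=; congr (_ + _); apply: eq_big => j;
  rewrite ?inE ?colKl ?colKr.
Qed.

End SplitColumns.

Section SpanMeet.
Variables (C : numClosedFieldType) (d : nat).
Implicit Types (A B : 'M[C]_d).

Lemma orthonormal_cols_independent A :
  orthonormal_basis A -> forall T, ~ cols_dependent A T.
Proof.
move=> oA T [c [[k kT /negP ck0] sum0]]; apply/ck0/eqP.
have coord0 i : \sum_(j in T) c j * A i j = 0.
  transitivity ((\sum_(j in T) c j *: col j A) i 0); last by rewrite sum0 mxE.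
  by rewrite summxE; apply: eq_bigr => j _; rewrite !mxE.
(* c k is the inner product of column k with the vanishing combination *)
transitivity (\sum_(i < d) (A i k)^* * \sum_(j in T) c j * A i j).
  symmetry; under eq_bigr do rewrite mulr_sumr.
  rewrite exchange_big /=.
  under eq_bigr do (under eq_bigr do rewrite mulrCA; rewrite -mulr_sumr oA).
  rewrite (bigD1 k) //= eqxx mulr1 big1 ?addr0 // => j /andP[_ jk].
  by rewrite eq_sym (negbTE jk) mulr0.
by rewrite big1 // => i _; rewrite coord0 mulr0.
Qed.

Lemma combination_neq0_coef (n : nat) (M : 'M[C]_(d, n)) (S : {set 'I_n}) c :
  \sum_(j in S) c j *: col j M != 0 -> exists2 j, j \in S & c j != 0.
Proof.
move=> nz; apply/exists_inP; apply: contraR nz => /exists_inPn c0.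
by rewrite big1 // => j /c0; rewrite negbK => /eqP->; rewrite scale0r.
Qed.

Lemma spans_meet_neq0 A B SA SB :
  spans_meet A B SA SB -> SA != set0 /\ SB != set0.
Proof.
move=> [v [v0 [[a va] [b vb]]]].
have := v0; rewrite {1}va => /combination_neq0_coef[j jA _].
move: v0; rewrite vb => /combination_neq0_coef[k kB _].
by split; apply/set0Pn; [exists j | exists k].
Qed.

Lemma cols_dependent_row_mx A B T :
  (forall S, ~ cols_dependent A S) -> (forall S, ~ cols_dependent B S) ->
  cols_dependent (row_mx A B) T <-> spans_meet A B (lset T) (rset T).
Proof.
move=> indA indB; split.
  move=> [c [[i0 i0T ci0]]]; rewrite sum_cols_row_mx.
  set v := \sum_(j in _) _; set w := \sum_(j in _) _.
  move=> /eqP; rewrite addr_eq0 => /eqP vw.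
  exists v; split; last first.
    split; first by exists (fun j => c (lshift d j)).
    exists (fun j => - c (rshift d j)); rewrite vw -sumrN.
    by apply: eq_bigr => j _; rewrite scaleNr.
  apply/eqP => v0; have /eqP := v0; rewrite vw oppr_eq0 => /eqP w0.
  move: i0T ci0; rewrite -(splitK i0); case: (split i0) => j /= jT cj.
    apply: (indA (lset T)); exists (fun j => c (lshift d j)).
    by split; first exists j; rewrite ?inE.
  apply: (indB (rset T)); exists (fun j => c (rshift d j)).
  by split; first exists j; rewrite ?inE.
move=> [v [v0 [[a va] [b vb]]]].
exists (fun i => match split i with inl j => a j | inr j => - b j end); split.
  have := v0; rewrite {1}va => /combination_neq0_coef[j jT aj].
  by exists (lshift d j); rewrite ?inE ?(unsplitK (inl _ j)) in jT *.
rewrite sum_cols_row_mx.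
under eq_bigr do rewrite (unsplitK (inl _ _)).
under [X in _ + X]eq_bigr do rewrite (unsplitK (inr _ _)) scaleNr.
by rewrite sumrN -va -vb subrr.
Qed.

End SpanMeet.

Theorem mainTheorem1 (C : numClosedFieldType) (d : nat) (A B : 'M[C]_d) (s : nat) :
  orthonormal_basis A -> orthonormal_basis B ->
  (2 <= s <= d.+1)%N ->
  (s_order_incompatible A B s <-> spark_is (row_mx A B) s).
Proof.
move=> /orthonormal_cols_independent indA /orthonormal_cols_independent indB _.
have dep_meet T := cols_dependent_row_mx T indA indB.
split=> [[small [SA [SB [card_s meet]]]] | [[T [card_T dep]] small]]; split.
- exists (join_set SA SB); rewrite card_split_set lset_join rset_join.
  by split=> //; apply/dep_meet; rewrite lset_join rset_join.
- move=> T lt_T_s /dep_meet meet_T; have [nA nB] := spans_meet_neq0 meet_T.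
  by apply: small nA nB _ meet_T; rewrite -card_split_set.
- move=> SA SB _ _ lt_s meet; apply: (small (join_set SA SB)).
    by rewrite card_split_set lset_join rset_join.
  by apply/dep_meet; rewrite lset_join rset_join.
- by exists (lset T), (rset T); split; [rewrite -card_split_set | apply/dep_meet].
Qed.
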